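(* Let $f_i:\mathbb{R}^p\to\mathbb{R}$, $1\le i\le n$, be $L_i$-smooth for some $L_i>0$, and suppose $f=\frac1n\sum_{i=1}^nf_i$ takes the form $f(x)=g(Hx)$ for an $\alpha$-strongly convex and $\mathbf{L}$-smooth function $g:\mathbb{R}^m\to\mathbb{R}$ and $H\in\mathbb{R}^{m\times p}$. Then $L:=\max_{1\le i\le n}L_i$ satisfies $L\ge\alpha\|H\|_2^2$.
   Context: $h$ is $L$-smooth if $\|\nabla h(x)-\nabla h(y)\|\le L\|x-y\|$ for all $x,y$; $\alpha$-strongly convex ($\alpha\ge 0$) if $h(y)\ge h(x)+\langle y-x,\nabla h(x)\rangle+\frac\alpha2\|y-x\|^2$ for all $x,y$. $\|H\|_2=\sup_{x\ne0}\|Hx\|/\|x\|$ with Euclidean norms. *)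

From HB Require Import structures.
From mathcomp Require Import all_boot all_order all_algebra.
From mathcomp Require Import all_classical all_reals all_analysis.
Set Implicit Arguments. Unset Strict Implicit. Unset Printing Implicit Defensive.
Import Order.TTheory GRing.Theory Num.Theory.
Import numFieldNormedType.Exports.
Local Open Scope ring_scope.
Local Open Scope classical_set_scope.

Section Defs.
Variable R : realType.

Definition dotv {p : nat} (u v : 'cV[R]_p) : R := \sum_(i < p) u i 0 * v i 0.
Definition enorm {p : nat} (u : 'cV[R]_p) : R := Num.sqrt (dotv u u).

Definition gradient {p : nat} (h : 'cV[R]_p -> R) (x : 'cV[R]_p) : 'cV[R]_p :=
  \col_(i < p) ('d h x (delta_mx i 0 : 'cV[R]_p)).

Definition L_smooth {p : nat} (h : 'cV[R]_p -> R) (L : R) : Prop :=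
  (forall x, differentiable h x) /\
  forall x y, enorm (gradient h x - gradient h y) <= L * enorm (x - y).

Definition strongly_convex {p : nat} (h : 'cV[R]_p -> R) (alpha : R) : Prop :=
  0 <= alpha /\
  forall x y, h y >= h x + dotv (y - x) (gradient h x) + alpha / 2 * enorm (y - x) ^+ 2.

Definition opnorm2 {m p : nat} (H : 'M[R]_(m, p)) : R :=
  sup [set enorm (H *m x) / enorm x | x in [set x : 'cV[R]_p | x != 0]].

End Defs.

From HB Require Import structures.
From mathcomp Require Import all_boot all_order all_algebra.
From mathcomp Require Import all_classical all_reals all_analysis.
From mathcomp Require Import lra.
Set Implicit Arguments.
Unset Strict Implicit.

Import Order.TTheory GRing.Theory Num.Theory.
Import numFieldNormedType.Exports.
Local Open Scope ring_scope.

(* Differentiating x |-> g (H x) = (1/n) sum_i f_i x along v gives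
   <H v, grad g (H x)> = (1/n) sum_i <v, grad f_i x>.  Strong convexity makes grad g
   strongly monotone, so for every z
     alpha |H z|^2 <= <H z, grad g (H z) - grad g 0>
                    = (1/n) sum_i <z, grad f_i z - grad f_i 0> <= L |z|^2,
   the last step by the L_i-Lipschitz continuity of grad f_i.  Hence
   |H z| <= sqrt (L / alpha) |z|, i.e. alpha ||H||_2^2 <= L. *)

Section Dotv.
Variables (R : realType) (p : nat).
Implicit Types (u v w : 'cV[R]_p).

Lemma dotvBr u v w : dotv u (v - w) = dotv u v - dotv u w.
Proof. by rewrite /dotv -sumrB; apply: eq_bigr => i _; rewrite !mxE mulrBr. Qed.

Lemma dotvNl u v : dotv (- u) v = - dotv u v.
Proof. by rewrite /dotv -sumrN; apply: eq_bigr => i _; rewrite !mxE mulNr. Qed.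

Lemma dotv_ge0 u : 0 <= dotv u u.
Proof. by apply: sumr_ge0 => i _; rewrite -expr2 sqr_ge0. Qed.

Lemma dotv_eq0 u : (dotv u u == 0) = (u == 0).
Proof.
apply/eqP/eqP => [u0|->]; last by rewrite /dotv big1 // => i _; rewrite mxE mul0r.
apply/matrixP => i j; rewrite (ord1 j) mxE.
have sq_ge0 (k : 'I_p) : true -> 0 <= u k 0 * u k 0 by rewrite -expr2 sqr_ge0.
by have /eqP := @psumr_eq0P _ _ _ _ sq_ge0 u0 i isT; rewrite mulf_eq0 orbb => /eqP.
Qed.

Lemma enorm_ge0 u : 0 <= enorm u.
Proof. exact: sqrtr_ge0. Qed.

Lemma enorm_sq u : enorm u ^+ 2 = dotv u u.
Proof. by rewrite sqr_sqrtr // dotv_ge0. Qed.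

Lemma enorm_gt0 u : u != 0 -> 0 < enorm u.
Proof. by move=> u0; rewrite sqrtr_gt0 lt_def dotv_eq0 u0 dotv_ge0. Qed.

Lemma enormN u : enorm (- u) = enorm u.
Proof. by rewrite /enorm /dotv; congr Num.sqrt; apply: eq_bigr => i _; rewrite !mxE mulrNN. Qed.

Lemma dotv_le_of_enorm_le u w (c : R) :
  0 < c -> enorm w <= c * enorm u -> dotv u w <= c * enorm u ^+ 2.
Proof.
move=> c_gt0 le_wu; rewrite enorm_sq.
have ww_le : dotv w w <= c ^+ 2 * dotv u u.
  rewrite -!enorm_sq -exprMn ler_sqr ?nnegrE ?enorm_ge0 //.
  by rewrite mulr_ge0 ?enorm_ge0 ?ltW.
have sum_sq : 0 <= c ^+ 2 * dotv u u - 2 * c * dotv u w + dotv w w.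
  have -> : c ^+ 2 * dotv u u - 2 * c * dotv u w + dotv w w =
            \sum_(i < p) (c * u i 0 - w i 0) ^+ 2.
    by rewrite /dotv !mulr_sumr -sumrB -big_split; apply: eq_bigr => i _ /=; lra.
  by apply: sumr_ge0 => i _; rewrite sqr_ge0.
have two_c_gt0 : 0 < 2 * c by rewrite mulr_gt0.
rewrite -(ler_pM2l two_c_gt0); lra.
Qed.

End Dotv.

Lemma mean_le (R : numFieldType) n (F : 'I_n -> R) (c : R) :
  (0 < n)%N -> (forall i, F i <= c) -> n%:R^-1 * \sum_(i < n) F i <= c.
Proof.
move=> n_gt0 F_le; rewrite ler_pdivrMl ?ltr0n // mulr_natl.
apply: le_trans (ler_sum _ (fun i _ => F_le i)) _.
by rewrite sumr_const card_ord.
Qed.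

Lemma diff_dotv_gradient (R : realType) p (h : 'cV[R]_p -> R) x v :
  'd h x v = dotv v (gradient h x).
Proof.
rewrite {1}(matrix_sum_delta v) linear_sum /dotv; apply: eq_bigr => i _.
by rewrite big_ord1 linearZ /= mxE.
Qed.

Lemma derive_comp_mulmx (R : realType) m p (g : 'cV[R]_m -> R)
    (H : 'M[R]_(m, p)) x v :
  'D_v (fun y => g (H *m y)) x = 'D_(H *m v) g (H *m x).
Proof. by rewrite /derive /=; under eq_fun => h do rewrite mulmxDr -scalemxAr. Qed.

Lemma derive_scaled_sum (R : realType) n p (fs : 'I_n -> 'cV[R]_p -> R)
    (k : R) x v :
  (forall i, differentiable (fs i) x) ->
  'D_v (fun y => k * \sum_(i < n) fs i y) x = k * \sum_(i < n) 'd (fs i) x v.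
Proof.
move=> fs_diff.
have fs_der i : is_derive x v (fs i) ('d (fs i) x v).
  by apply: DeriveDef; [exact: diff_derivable | exact: deriveE].
have /(@derive_val _ _ _ _ _ _ _) sum_der := is_deriveZ k (is_derive_sum fs_der).
rewrite -[RHS]sum_der.
by congr derive; apply: funext => y; rewrite /= fct_sumE.
Qed.

Lemma gradient_comp_mulmx_mean (R : realType) n p m
    (fs : 'I_n -> 'cV[R]_p -> R) (g : 'cV[R]_m -> R) (H : 'M[R]_(m, p)) (k : R) :
  (forall i x, differentiable (fs i) x) -> (forall y, differentiable g y) ->
  (forall x, k * \sum_(i < n) fs i x = g (H *m x)) ->
  forall x v, dotv (H *m v) (gradient g (H *m x)) =
              k * \sum_(i < n) dotv v (gradient (fs i) x).
Proof.
move=> fs_diff g_diff f_eq x v.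
rewrite -diff_dotv_gradient -deriveE // -derive_comp_mulmx.
rewrite (_ : (fun y => g (H *m y)) = fun y => k * \sum_(i < n) fs i y); last first.
  by apply: funext => y; rewrite f_eq.
rewrite derive_scaled_sum //; congr (_ * _).
by apply: eq_bigr => i _; rewrite diff_dotv_gradient.
Qed.

Lemma strongly_convex_gradient_monotone (R : realType) m (g : 'cV[R]_m -> R) alpha :
  strongly_convex g alpha -> forall a b : 'cV[R]_m,
  alpha * enorm (b - a) ^+ 2 <= dotv (b - a) (gradient g b - gradient g a).
Proof.
move=> [_ g_sc] a b.
have le_ab : g a + dotv (b - a) (gradient g a) + alpha / 2 * enorm (b - a) ^+ 2 <= g b.
  exact: g_sc.
have le_ba : g b - dotv (b - a) (gradient g b) + alpha / 2 * enorm (b - a) ^+ 2 <= g a.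
  by rewrite -dotvNl opprB -enormN opprB; exact: g_sc.
rewrite dotvBr; move: le_ab le_ba.
(* [lra] is extremely slow on these compound atoms, so they are abstracted first. *)
generalize (g a) (g b) (enorm (b - a) ^+ 2) (dotv (b - a) (gradient g a))
  (dotv (b - a) (gradient g b)).
by move=> *; lra.
Qed.

Lemma mulmx_sq_le_of_monotone_mean (R : realType) n p m (H : 'M[R]_(m, p))
    (G : 'cV[R]_m -> 'cV[R]_m) (Gs : 'I_n -> 'cV[R]_p -> 'cV[R]_p)
    (alpha : R) (Ls : 'I_n -> R) (L : R) :
  (0 < n)%N -> (forall i, 0 < Ls i) -> (forall i, Ls i <= L) ->
  (forall a b, alpha * enorm (b - a) ^+ 2 <= dotv (b - a) (G b - G a)) ->
  (forall i x y, enorm (Gs i x - Gs i y) <= Ls i * enorm (x - y)) ->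
  (forall x v, dotv (H *m v) (G (H *m x)) = n%:R^-1 * \sum_(i < n) dotv v (Gs i x)) ->
  forall z, alpha * enorm (H *m z) ^+ 2 <= L * enorm z ^+ 2.
Proof.
move=> n_gt0 Ls_gt0 Ls_le G_mono Gs_lip G_eq z.
have := G_mono (H *m 0) (H *m z).
rewrite -mulmxBr dotvBr !G_eq -mulrBr -sumrB subr0 => /le_trans; apply.
apply: mean_le => // i; rewrite -dotvBr.
have := dotv_le_of_enorm_le (Ls_gt0 i) (Gs_lip i z 0).
rewrite subr0 => /le_trans; apply.
by rewrite ler_wpM2r ?sqr_ge0.
Qed.

Local Open Scope classical_set_scope.

Lemma opnorm2_le (R : realType) m p (H : 'M[R]_(m, p)) (c : R) :
  0 <= c -> (forall z, enorm (H *m z) <= c * enorm z) -> opnorm2 H <= c.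
Proof.
move=> c_ge0 H_le; rewrite /opnorm2; set S := (X in sup X).
have [[e Se]|S0] := pselect (S !=set0); last first.
  by rewrite (_ : S = set0) ?sup0 //; apply/seteqP; split=> e // Se; apply: S0; exists e.
apply: ge_sup; first by exists e.
move=> _ [z /= z_neq0 <-].
by rewrite ler_pdivrMr ?enorm_gt0.
Qed.

Lemma opnorm2_ge0 (R : realType) m p (H : 'M[R]_(m, p)) : 0 <= opnorm2 H.
Proof.
rewrite /opnorm2; set S := (X in sup X).
have [[[e Se] S_ub]|S_nsup] := pselect (has_sup S); last by rewrite sup_out.
apply: le_trans (ub_le_sup S_ub Se).
by case: Se => z _ <-; rewrite divr_ge0 ?enorm_ge0.
Qed.

Lemma opnorm2_sq_le (R : realType) m p (H : 'M[R]_(m, p)) (alpha L : R) :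
  0 <= alpha -> 0 <= L ->
  (forall z, alpha * enorm (H *m z) ^+ 2 <= L * enorm z ^+ 2) ->
  alpha * opnorm2 H ^+ 2 <= L.
Proof.
move=> alpha_ge0 L_ge0 H_le.
have [->|alpha_neq0] := eqVneq alpha 0; first by rewrite mul0r.
have alpha_gt0 : 0 < alpha by rewrite lt_def alpha_neq0.
have La_ge0 : 0 <= L / alpha by rewrite divr_ge0.
have c_ge0 : 0 <= Num.sqrt (L / alpha) by exact: sqrtr_ge0.
have opnorm_le : opnorm2 H <= Num.sqrt (L / alpha).
  apply: opnorm2_le => // z.
  rewrite -ler_sqr ?nnegrE ?mulr_ge0 ?enorm_ge0 //.
  by rewrite exprMn (sqr_sqrtr La_ge0) mulrAC ler_pdivlMr // mulrC H_le.
rewrite -ler_pdivlMl // mulrC -(sqr_sqrtr La_ge0).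
by rewrite ler_sqr ?nnegrE ?opnorm2_ge0.
Qed.

Theorem lemma2p13 (R : realType) (n p m : nat) (fs : 'I_n -> 'cV[R]_p -> R)
  (Ls : 'I_n -> R) (g : 'cV[R]_m -> R) (alpha Lg : R) (H : 'M[R]_(m, p)) :
  (0 < n)%N ->
  (forall i, 0 < Ls i) ->
  (forall i, L_smooth (fs i) (Ls i)) ->
  strongly_convex g alpha ->
  L_smooth g Lg ->
  (forall x : 'cV[R]_p, (n%:R)^-1 * \sum_(i < n) fs i x = g (H *m x)) ->
  \big[Num.max/0]_(i < n) Ls i >= alpha * opnorm2 H ^+ 2.
Proof.
move=> n_gt0 Ls_gt0 fs_smooth g_sc [g_diff _] f_eq.
have Ls_le i : Ls i <= \big[Num.max/0]_(i < n) Ls i by exact: le_bigmax.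
have grad_eq := gradient_comp_mulmx_mean (fun i => (fs_smooth i).1) g_diff f_eq.
apply: opnorm2_sq_le.
- by case: g_sc.
- exact: le_trans (ltW (Ls_gt0 (Ordinal n_gt0))) (Ls_le _).
- apply: mulmx_sq_le_of_monotone_mean n_gt0 Ls_gt0 Ls_le _ _ grad_eq.
    exact: strongly_convex_gradient_monotone.
  by move=> i; case: (fs_smooth i).
Qed.
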